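(* Let $\lambda\supseteq\mu$ be partitions and let $T$ be a Dyck tiling of $\lambda\setminus\mu$. The following nine conditions are equivalent: (1) $T$ is cover-inclusive; (2) whenever $\mathfrak a$ and $\mathtt N(\mathfrak a)$ are both nodes of $\lambda\setminus\mu$, we have $\operatorname{dp}(\mathtt N(\mathfrak a))\ge\operatorname{dp}(\mathfrak a)$; (3) whenever $\mathfrak a$ and $\mathtt N(\mathfrak a)$ are both nodes of $\lambda\setminus\mu$, we have $\operatorname{tile}(\mathfrak a)+(1,1)\subseteq\operatorname{tile}(\mathtt N(\mathfrak a))$; (4) whenever $\mathfrak a$ and $\mathtt N(\mathfrak a)$ are nodes of $\lambda\setminus\mu$ and $\mathfrak a$ is attached to $\mathtt{NW}(\mathfrak a)$, the node $\mathtt{NW}(\mathtt N(\mathfrak a))$ lies in $\lambda\setminus\mu$ and $\mathtt N(\mathfrak a)$ is attached to it; (5) whenever $\mathfrak a$ and $\mathtt N(\mathfrak a)$ are nodes of $\lambda\setminus\mu$ and $\mathtt N(\mathfrak a)$ is the end node of its tile, $\mathfrak a$ is the end node of its tile; (6) $T$ is right-cover-inclusive; (7) whenever $\mathfrak a$ and $\mathtt N(\mathfrak a)$ are nodes of $\lambda\setminus\mu$ and $\mathfrak a$ is attached to $\mathtt{NE}(\mathfrak a)$, the node $\mathtt{NE}(\mathtt N(\mathfrak a))$ lies in $\lambda\setminus\mu$ and $\mathtt N(\mathfrak a)$ is attached to it; (8) whenever $\mathfrak a$ and $\mathtt N(\mathfrak a)$ are nodes of $\lambda\setminus\mu$ and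 $\mathtt N(\mathfrak a)$ is the start node of its tile, $\mathfrak a$ is the start node of its tile; (9) $T$ is left-cover-inclusive.
   Context: A partition $\lambda$ is identified with its Young diagram $\{(a,b)\in\mathbb N^2: b\le\lambda_a\}$ ($\mathbb N=\{1,2,\dots\}$); $\lambda\supseteq\mu$ means $\lambda_i\ge\mu_i$ for all $i$, and $\lambda\setminus\mu$ is the set difference of diagrams. Elements of $\mathbb N^2$ are called nodes. The height of $(a,b)$ is $\operatorname{ht}(a,b)=a+b$, and $(a,b)$ lies in column $b-a$; a node is to the left of another if its column index is smaller. Neighbours of a node $\mathfrak n$: $\mathtt{NE}(\mathfrak n)=\mathfrak n+(0,1)$, $\mathtt{SW}(\mathfrak n)=\mathfrak n-(0,1)$, $\mathtt{NW}(\mathfrak n)=\mathfrak n+(1,0)$, $\mathtt{SE}(\mathfrak n)=\mathfrak n-(1,0)$, $\mathtt N(\mathfrak n)=\mathfrak n+(1,1)$, $\mathtt S(\mathfrak n)=\mathfrak n-(1,1)$. A tile is a finite nonempty set $t$ of nodes that can be ordered $\mathfrak n_1,\dots,\mathfrak n_r$ with $\mathfrak n_{i+1}\in\{\mathtt{NE}(\mathfrak n_i),\mathtt{SE}(\mathfrak n_i)\}$; its start $\operatorname{st}(t)$ is its leftmost node and its end $\operatorname{en}(t)$ its rightmost node; $\operatorname{ht}(t)=\max_{\mathfrak n\in t}\operatorname{ht}(\mathfrak n)$; $t$ is a Dyck tile if $\operatorname{ht}(\operatorname{st}t)=\operatorname{ht}(\operatorname{en}t)=\operatorname{ht}(t)$.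 The depth of $\mathfrak n\in t$ is $\operatorname{dp}(\mathfrak n)=\operatorname{ht}(t)-\operatorname{ht}(\mathfrak n)$. A Dyck tiling of $\lambda\setminus\mu$ is a partition of $\lambda\setminus\mu$ into Dyck tiles; $\operatorname{tile}(\mathfrak n)$ is the tile containing $\mathfrak n$, and $\mathfrak n$ is attached to a neighbour if they lie in the same tile. A Dyck tiling is left-cover-inclusive if whenever $\mathfrak a,\mathtt N(\mathfrak a)\in\lambda\setminus\mu$, $\operatorname{st}(\operatorname{tile}(\mathtt N(\mathfrak a)))$ lies weakly to the left of $\operatorname{st}(\operatorname{tile}(\mathfrak a))$; right-cover-inclusive if whenever $\mathfrak a,\mathtt N(\mathfrak a)\in\lambda\setminus\mu$, $\operatorname{en}(\operatorname{tile}(\mathtt N(\mathfrak a)))$ lies weakly to the right of $\operatorname{en}(\operatorname{tile}(\mathfrak a))$; cover-inclusive if both. *)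

From mathcomp Require Import all_boot all_order all_algebra.
Import Order.TTheory GRing.Theory Num.Theory.

(* Nodes: pairs (a,b); nodes of diagrams always have a,b >= 1. *)
Definition node := (nat * nat)%type.

(* A partition is a weakly decreasing sequence of naturals
   (trailing zeros allowed); part l a = lambda_a, 1-indexed. *)
Definition is_partition (l : seq nat) : Prop := sorted geq l.
Definition part (l : seq nat) (a : nat) : nat := nth 0 l a.-1.

Definition in_diagram (l : seq nat) (n : node) : Prop :=
  1 <= n.1 /\ 1 <= n.2 /\ n.2 <= part l n.1.

Definition pcontains (l m : seq nat) : Prop :=
  forall a, 1 <= a -> part m a <= part l a.

Definition in_skew (l m : seq nat) (n : node) : Prop :=
  in_diagram l n /\ ~ in_diagram m n.

Definition ht (n : node) : nat := n.1 + n.2.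
Definition col (n : node) : int := (n.2%:Z - n.1%:Z)%R.

Definition NE (n : node) : node := (n.1, n.2.+1).
Definition NW (n : node) : node := (n.1.+1, n.2).
Definition Nn (n : node) : node := (n.1.+1, n.2.+1).

Definition nset := node -> Prop.

(* step relation: y = NE x or y = SE x (i.e. x = NW y) *)
Definition tile_step (x y : node) : bool := (y == NE x) || (x == NW y).

Definition is_tile (t : nset) : Prop :=
  exists s : seq node, s != [::] /\ sorted tile_step s /\
    forall x, t x <-> x \in s.

Definition is_start (t : nset) (n : node) : Prop :=
  t n /\ forall m, t m -> (col n <= col m)%R.
Definition is_end (t : nset) (n : node) : Prop :=
  t n /\ forall m, t m -> (col m <= col n)%R.

Definition tile_ht (t : nset) (h : nat) : Prop :=
  (exists n, t n /\ ht n = h) /\ forall n, t n -> ht n <= h.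

Definition is_dyck_tile (t : nset) : Prop :=
  is_tile t /\
  exists h, tile_ht t h /\
    forall s e, is_start t s -> is_end t e -> ht s = h /\ ht e = h.

Definition dyck_tiling (l m : seq nat) (T : nset -> Prop) : Prop :=
  (forall t, T t -> is_dyck_tile t /\ forall n, t n -> in_skew l m n) /\
  (forall n, in_skew l m n -> exists t, T t /\ t n) /\
  (forall t1 t2 n, T t1 -> T t2 -> t1 n -> t2 n -> forall x, t1 x <-> t2 x).

Definition depth (T : nset -> Prop) (n : node) (d : nat) : Prop :=
  exists t h, T t /\ t n /\ tile_ht t h /\ d = h - ht n.

Definition attached (T : nset -> Prop) (n m : node) : Prop :=
  exists t, T t /\ t n /\ t m.

Definition is_start_of_tile (T : nset -> Prop) (n : node) : Prop :=
  exists t, T t /\ t n /\ is_start t n.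
Definition is_end_of_tile (T : nset -> Prop) (n : node) : Prop :=
  exists t, T t /\ t n /\ is_end t n.

Definition left_cover_inclusive (l m : seq nat) (T : nset -> Prop) : Prop :=
  forall a, in_skew l m a -> in_skew l m (Nn a) ->
  forall t1 t2 s1 s2, T t1 -> t1 (Nn a) -> T t2 -> t2 a ->
    is_start t1 s1 -> is_start t2 s2 -> (col s1 <= col s2)%R.

Definition right_cover_inclusive (l m : seq nat) (T : nset -> Prop) : Prop :=
  forall a, in_skew l m a -> in_skew l m (Nn a) ->
  forall t1 t2 e1 e2, T t1 -> t1 (Nn a) -> T t2 -> t2 a ->
    is_end t1 e1 -> is_end t2 e2 -> (col e2 <= col e1)%R.

Definition cover_inclusive (l m : seq nat) (T : nset -> Prop) : Prop :=
  left_cover_inclusive l m T /\ right_cover_inclusive l m T.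

(* The pivot is condition (3): each tile, shifted by (1,1), lies inside the
   tile containing the shift of any of its nodes.  It implies the other
   conditions directly.  Conversely, each other condition rules out either a
   right defect (a node a attached to NE(a) such that N(a) ends its tile) or a
   left defect (a attached to NW(a), N(a) starting its tile).  If (3) fails at
   a, walking along the tiles of a and N(a) simultaneously, away from a, meets
   a defect of one of the two kinds.  A left defect leads to a right defect
   further to the right: otherwise the walk reaches the end e of the tile of
   a, and N(e), of height ht(e)+2, would lie above the start N(a) of its own
   tile.  Transposing the diagram exchanges the two kinds of defects, so
   excluding either kind already forces (3). *)

From Pilot Require Import Defs.
From mathcomp Require Import all_boot all_order all_algebra zify.
From Stdlib Require Import FunctionalExtensionality.
Import Order.TTheory GRing.Theory Num.Theory.
(* Put [col] of [Defs] back in scope over the matrix column [col]. *)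
Import Defs.

Set Implicit Arguments.
Unset Strict Implicit.
Unset Printing Implicit Defensive.

Record dyck_shape (t : nset) : Prop := DyckShape {
  shape_col_inj : forall x y, t x -> t y -> col x = col y -> x = y;
  shape_succ : forall x, t x -> is_end t x \/ exists2 y, t y & tile_step x y;
  shape_pred : forall x, t x -> is_start t x \/ exists2 y, t y & tile_step y x;
  shape_start : exists s, is_start t s;
  shape_end : exists e, is_end t e;
  shape_ht : exists h, [/\ tile_ht t h, forall s, is_start t s -> ht s = h
                        & forall e, is_end t e -> ht e = h]
}.

Lemma tile_step_col x y : tile_step x y -> col y = (col x + 1)%R.
Proof. by case/orP=> /eqP->; rewrite /col /=; lia. Qed.

Lemma tile_step_to_Nn w y : tile_step w (Nn y) -> w = NW y \/ w = NW (Nn y).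
Proof.
case: w y => [w1 w2] [y1 y2]; rewrite /tile_step /NE /NW /Nn /= !xpair_eqE.
by case/orP=> /andP [/eqP e1 /eqP e2]; [left | right]; congr pair; lia.
Qed.

Lemma tile_step_from_Nn p z : tile_step (Nn p) z -> z = Nn (NE p) \/ z = NE p.
Proof.
case: p z => [p1 p2] [z1 z2]; rewrite /tile_step /NE /NW /Nn /= !xpair_eqE.
by case/orP=> /andP [/eqP e1 /eqP e2]; [left | right]; congr pair; lia.
Qed.

Lemma Nn_neq x : Nn x <> x.
Proof. by case: x => a b []; lia. Qed.

Lemma dyck_tile_shape t : is_dyck_tile t -> dyck_shape t.
Proof.
case=> -[s [s_nil [s_sorted ts]]] [h [[_ h_max] h_ends]].
pose x0 : node := (0, 0).
have /(sortedP x0) s_step := s_sorted.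
have s_size : 0 < size s by rewrite lt0n size_eq0.
have t_nth i : i < size s -> t (nth x0 s i) by move=> i_lt; apply/ts/mem_nth.
have col_nth i : i < size s -> col (nth x0 s i) = (col (nth x0 s 0) + i%:Z)%R.
  elim: i => [|i IH] i_lt; first by rewrite addr0.
  by rewrite (tile_step_col (s_step i i_lt)) IH ?(ltnW i_lt) //; lia.
have t_index x : t x -> [/\ nth x0 s (index x s) = x, index x s < size s
                         & col x = (col (nth x0 s 0) + (index x s)%:Z)%R].
  move=> /ts xs; have idx_lt : index x s < size s by rewrite index_mem.
  split=> //; first exact: nth_index.
  by rewrite -{1}(nth_index x0 xs) [LHS]col_nth.
have start_s : is_start t (nth x0 s 0).
  by split=> [|m /t_index [_ _ ->]]; [exact: t_nth | lia].
have end_s : is_end t (nth x0 s (size s).-1).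
  split=> [|m /t_index [_ m_lt ->]]; first by apply: t_nth; lia.
  by rewrite (col_nth (size s).-1); lia.
constructor.
- move=> x y /t_index [x_nth _ ->] /t_index [y_nth _ ->] e.
  by rewrite -x_nth -y_nth; congr nth; lia.
- move=> x tx; have [x_nth _ x_col] := t_index x tx.
  case: (ltnP (index x s).+1 (size s)) => [succ_lt | succ_ge].
    right; exists (nth x0 s (index x s).+1); first exact: t_nth.
    by rewrite -{1}x_nth; exact: s_step.
  by left; split=> // m /t_index [_ m_lt ->]; rewrite x_col; lia.
- move=> x tx; have [x_nth x_lt x_col] := t_index x tx.
  case: (index x s) x_nth x_lt x_col => [|i] x_nth x_lt x_col.
    by left; split=> // m /t_index [_ _ ->]; rewrite x_col; lia.
  right; exists (nth x0 s i); first by apply: t_nth; lia.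
  by rewrite -x_nth; apply: s_step.
- by exists (nth x0 s 0).
- by exists (nth x0 s (size s).-1).
- exists h; split=> [| st /h_ends | en /h_ends].
  + split=> //; exists (nth x0 s 0); split; first exact: t_nth.
    by case: (h_ends _ _ start_s end_s).
  + by case/(_ _ end_s).
  + by case/(_ _ start_s).
Qed.

(* The properties of a Dyck tiling of a skew shape that the argument uses;
   unlike [dyck_tiling] they are preserved by transposition ([tiling_tr]). *)
Record tiling (S : nset) (T : nset -> Prop) : Prop := Tiling {
  tiling_bounded : exists A B : int, forall x, S x -> (A < col x)%R /\ (col x < B)%R;
  tiling_convex : forall p, S p -> S (Nn p) -> S (NE p) /\ S (NW p);
  tiling_shape : forall t, T t -> dyck_shape t;
  tiling_sub : forall t x, T t -> t x -> S x;
  tiling_cover : forall x, S x -> exists2 t, T t & t x;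
  tiling_unique : forall t1 t2 x y, T t1 -> T t2 -> t1 x -> t2 x -> t1 y -> t2 y
}.

Lemma part_succ_le l a : is_partition l -> 1 <= a -> part l a.+1 <= part l a.
Proof.
move=> /(sortedP 0) l_sorted; case: a => // a _; rewrite /part /=.
by case: (ltnP a.+1 (size l)) => [/l_sorted // | ?]; rewrite nth_default.
Qed.

Lemma nth_le_sumn (l : seq nat) i : nth 0 l i <= sumn l.
Proof.
elim: l i => [|x l IH] [|i] //=; first exact: leq_addr.
exact: leq_trans (IH i) (leq_addl _ _).
Qed.

Lemma in_skew_convex l m p : is_partition l -> is_partition m ->
  in_skew l m p -> in_skew l m (Nn p) -> in_skew l m (NE p) /\ in_skew l m (NW p).
Proof.
case: p => a b l_part m_part [[/= a_ge1 [b_ge1 b_le]] p_notin_m] [[/= _ [_ Nb_le]] _].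
have := part_succ_le l_part a_ge1; have := part_succ_le m_part a_ge1.
rewrite /in_skew /in_diagram /NE /NW /= in p_notin_m * => lm ll.
by split; split=> [| m_in]; try lia; apply: p_notin_m; lia.
Qed.

Lemma in_diagram_col_bounded l x : in_diagram l x ->
  (- (size l)%:Z < col x)%R /\ (col x < (sumn l)%:Z)%R.
Proof.
case: x => a b [/= a_ge1 [b_ge1 b_le]]; have := nth_le_sumn l a.-1.
have a_le : a <= size l.
  by case: (leqP a (size l)) => // a_gt; move: b_le; rewrite /part nth_default; lia.
by rewrite /part in b_le; rewrite /col /=; lia.
Qed.

Lemma skew_tiling l m T : is_partition l -> is_partition m -> dyck_tiling l m T ->
  tiling (in_skew l m) T.
Proof.
move=> l_part m_part [T_tiles [T_cover T_unique]]; split.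
- by exists (- (size l)%:Z)%R, ((sumn l)%:Z)%R => x [/in_diagram_col_bounded].
- by move=> p; apply: in_skew_convex.
- by move=> t /T_tiles [/dyck_tile_shape].
- by move=> t x /T_tiles [_]; apply.
- by move=> x /T_cover [t [Tt tx]]; exists t.
- by move=> t1 t2 x y T1 T2 t1x t2x; apply: (T_unique t1 t2 x T1 T2 t1x t2x y).1.
Qed.

Definition right_defect (S : nset) (T : nset -> Prop) (q : node) : Prop :=
  [/\ S q, S (Nn q), attached T q (NE q) & is_end_of_tile T (Nn q)].
Definition left_defect (S : nset) (T : nset -> Prop) (q : node) : Prop :=
  [/\ S q, S (Nn q), attached T q (NW q) & is_start_of_tile T (Nn q)].

Definition shift_included (S : nset) (T : nset -> Prop) : Prop :=
  forall a, S a -> S (Nn a) -> forall t1 t2, T t1 -> t1 a -> T t2 -> t2 (Nn a) ->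
  forall x, t1 x -> t2 (Nn x).

Section Walk.

Variables (S : nset) (T : nset -> Prop).
Hypothesis hST : tiling S T.

Lemma tiles_col_inj t1 t2 x y z : T t1 -> T t2 -> t1 x -> t2 x -> t1 y -> t2 z ->
  col y = col z -> y = z.
Proof.
move=> T1 T2 t1x t2x t1y; apply: (shape_col_inj (tiling_shape hST T2)).
exact: (tiling_unique hST T1 T2 t1x t2x).
Qed.

Lemma left_defect_of_step t t' y : T t -> t y -> t (NW y) -> T t' ->
  t' (Nn (NW y)) -> ~ t' (Nn y) -> left_defect S T y.
Proof.
move=> Tt ty tNWy Tt' t'p t'Ny.
have SNy : S (Nn y).
  exact: (tiling_convex hST (tiling_sub hST Tt tNWy) (tiling_sub hST Tt' t'p)).1.
split=> //; [exact: (tiling_sub hST Tt ty) | by exists t |].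
have [t'' Tt'' t''Ny] := tiling_cover hST SNy.
exists t''; split=> //; split=> //.
case: (shape_pred (tiling_shape hST Tt'') t''Ny) => [// | [w t''w]].
case/tile_step_to_Nn=> ew; subst w.
- suff : y = Nn y by move/esym/Nn_neq.
  by apply: (tiles_col_inj Tt Tt'' tNWy t''w ty t''Ny); rewrite /col /=; lia.
- by case: t'Ny; apply: (tiling_unique hST Tt'' Tt' t''w t'p t''Ny).
Qed.

Lemma walk_step t1 t2 p y : T t1 -> T t2 -> t1 p -> t2 (Nn p) -> t1 y -> tile_step p y ->
  t2 (Nn y) \/ right_defect S T p \/ left_defect S T y.
Proof.
move=> T1 T2 t1p t2Np t1y.
have [Sp SNp] := (tiling_sub hST T1 t1p, tiling_sub hST T2 t2Np).
case: (shape_succ (tiling_shape hST T2) t2Np) => [Np_end | [z t2z /tile_step_from_Nn [] ez]];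
  case/orP=> /eqP ey; subst.
- by right; left; split=> //; [exists t1 | exists t2].
- right; right; apply: (left_defect_of_step T1 t1y t1p T2 t2Np) => /(proj2 Np_end).
  by rewrite /col /=; lia.
- by left.
- right; right; apply: (left_defect_of_step T1 t1y t1p T2 t2Np) => t2Ny.
  suff : Nn y = Nn (Nn y) by move/esym/Nn_neq.
  by apply: (tiles_col_inj T2 T2 t2Ny t2Ny t2Ny t2z); rewrite /col /=; lia.
- suff : p = Nn p by move/esym/Nn_neq.
  by apply: (tiles_col_inj T1 T2 t1y t2z t1p t2Np); rewrite /col /=; lia.
- by left.
Qed.

Lemma walk_right t1 t2 p : T t1 -> T t2 -> t1 p -> t2 (Nn p) ->
  [\/ exists q, right_defect S T q,
       exists2 q, left_defect S T q & (col p < col q)%R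
     | forall x, t1 x -> (col p <= col x)%R -> t2 (Nn x)].
Proof.
have [? [B S_bounded]] := tiling_bounded hST.
move=> T1 T2; have [n] : exists n : nat, (B - col p <= n%:Z)%R.
  by exists `|B - col p|%N; lia.
elim: n p => [|n IH] p p_bound t1p t2Np.
  by have [_] := S_bounded p (tiling_sub hST T1 t1p); lia.
have shape1 := tiling_shape hST T1.
have p_only x : t1 x -> col x = col p -> t2 (Nn x).
  by move=> t1x /(shape_col_inj shape1 t1x t1p) ->.
case: (shape_succ shape1 t1p) => [[_ p_end] | [y t1y step]].
  by apply: Or33 => x t1x le_px; apply: p_only => //; have := p_end x t1x; lia.
have col_y := tile_step_col step.
case: (walk_step T1 T2 t1p t2Np t1y step) => [t2Ny | [rd | ld]].
- have y_bound : (B - col y <= n%:Z)%R by lia.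
  case: (IH y y_bound t1y t2Ny) => [rd | [q ldq lt_yq] | incl].
  + exact: Or31.
  + by apply: Or32; exists q => //; lia.
  + apply: Or33 => x t1x le_px; have [le_yx | lt_xy] := leP (col y) (col x).
      exact: incl.
    by apply: p_only => //; lia.
- by apply: Or31; exists p.
- by apply: Or32; exists y => //; lia.
Qed.

Lemma right_defect_of_left_defect q : left_defect S T q -> exists r, right_defect S T r.
Proof.
have [? [B S_bounded]] := tiling_bounded hST.
have [n] : exists n : nat, (B - col q <= n%:Z)%R.
  by exists `|B - col q|%N; lia.
elim: n q => [|n IH] q q_bound
  [Sq SNq [t [Tt [tq tNWq]]] [t' [Tt' [t'Nq Nq_start]]]].
  by have [_] := S_bounded q Sq; lia.
case: (walk_right Tt Tt' tq t'Nq) => [// | [q' ldq' lt_qq'] | incl].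
  by apply: (IH q') ldq'; lia.
have [e e_end] := shape_end (tiling_shape hST Tt).
have [h [[_ h_max] _ h_end]] := shape_ht (tiling_shape hST Tt).
have [h' [[_ h'_max] h'_start _]] := shape_ht (tiling_shape hST Tt').
have t'Ne := incl e e_end.1 (e_end.2 q tq).
have := h'_max _ t'Ne; have := h'_start _ Nq_start; have := h_end _ e_end.
have := h_max _ tNWq; rewrite /ht /Nn /NW /=; lia.
Qed.

End Walk.

Definition tr_node (x : node) : node := (x.2, x.1).
Definition tr_set (t : nset) : nset := fun x => t (tr_node x).
Definition tr_family (T : nset -> Prop) : nset -> Prop := fun t => T (tr_set t).

Lemma tr_nodeK : involutive tr_node.
Proof. by case. Qed.

Lemma tr_setK : involutive tr_set.
Proof. by move=> t; apply: functional_extensionality => x; rewrite /tr_set tr_nodeK. Qed.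

Lemma col_tr x : col (tr_node x) = (- col x)%R.
Proof. by rewrite /col opprB. Qed.

Lemma ht_tr x : ht (tr_node x) = ht x.
Proof. exact: addnC. Qed.

Lemma tile_step_tr x y : tile_step (tr_node y) (tr_node x) = tile_step x y.
Proof.
case: x y => [x1 x2] [y1 y2]; rewrite /tile_step /NE /NW /= !xpair_eqE.
by rewrite orbC; congr orb; rewrite andbC.
Qed.

Lemma is_start_tr t x : is_start (tr_set t) x <-> is_end t (tr_node x).
Proof.
split=> -[tx x_ext]; split=> // m.
  by move=> tm; have := x_ext (tr_node m); rewrite /tr_set tr_nodeK !col_tr => /(_ tm); lia.
by move=> /x_ext; rewrite !col_tr; lia.
Qed.

Lemma is_end_tr t x : is_end (tr_set t) x <-> is_start t (tr_node x).
Proof.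
split=> -[tx x_ext]; split=> // m.
  by move=> tm; have := x_ext (tr_node m); rewrite /tr_set tr_nodeK !col_tr => /(_ tm); lia.
by move=> /x_ext; rewrite !col_tr; lia.
Qed.

Lemma dyck_shape_tr t : dyck_shape t -> dyck_shape (tr_set t).
Proof.
case=> col_inj succ pred [s s_start] [e e_end] [h [[[n [tn hn]] h_max] h_start h_end]].
split.
- move=> x y tx ty col_xy; apply: (can_inj tr_nodeK).
  by apply: (col_inj _ _ tx ty); rewrite !col_tr col_xy.
- move=> x tx; case: (pred _ tx) => [/is_end_tr | [y ty step]]; first by left.
  by right; exists (tr_node y); rewrite /tr_set ?tr_nodeK // -(tr_nodeK x) tile_step_tr.
- move=> x tx; case: (succ _ tx) => [/is_start_tr | [y ty step]]; first by left.
  by right; exists (tr_node y); rewrite /tr_set ?tr_nodeK // -(tr_nodeK x) tile_step_tr.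
- by exists (tr_node e); apply/is_start_tr; rewrite tr_nodeK.
- by exists (tr_node s); apply/is_end_tr; rewrite tr_nodeK.
- exists h; split=> [| x /is_start_tr /h_end | x /is_end_tr /h_start]; rewrite ?ht_tr //.
  split=> [| x /h_max]; rewrite ?ht_tr //.
  by exists (tr_node n); rewrite /tr_set tr_nodeK ht_tr.
Qed.

Lemma tiling_tr S T : tiling S T -> tiling (tr_set S) (tr_family T).
Proof.
case=> -[A [B S_bounded]] S_convex T_shape T_sub T_cover T_unique; split.
- by exists (- B)%R, (- A)%R => x /S_bounded; rewrite col_tr; lia.
- by move=> p /S_convex conv /conv [].
- by move=> t /T_shape /dyck_shape_tr; rewrite tr_setK.
- by move=> t x /T_sub t_sub tx; apply: t_sub; rewrite /tr_set tr_nodeK.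
- by move=> x /T_cover [t Tt tx]; exists (tr_set t); rewrite /tr_family ?tr_setK.
- move=> t1 t2 x y T1 T2; have := T_unique _ _ (tr_node x) (tr_node y) T1 T2.
  by rewrite /tr_set !tr_nodeK.
Qed.

Lemma attached_tr T x y : attached (tr_family T) x y <-> attached T (tr_node x) (tr_node y).
Proof.
split=> -[t [Tt [tx ty]]]; exists (tr_set t); last by rewrite /tr_family tr_setK.
by rewrite /tr_set !tr_nodeK.
Qed.

Lemma is_end_of_tile_tr T x :
  is_end_of_tile (tr_family T) x <-> is_start_of_tile T (tr_node x).
Proof.
split=> -[t [Tt [tx x_end]]]; exists (tr_set t).
  by rewrite /tr_set tr_nodeK; split=> //; split=> //; apply/is_start_tr; rewrite tr_nodeK.
by rewrite /tr_family tr_setK; split=> //; split=> //; apply/is_end_tr.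
Qed.

Lemma is_start_of_tile_tr T x :
  is_start_of_tile (tr_family T) x <-> is_end_of_tile T (tr_node x).
Proof.
split=> -[t [Tt [tx x_start]]]; exists (tr_set t).
  by rewrite /tr_set tr_nodeK; split=> //; split=> //; apply/is_end_tr; rewrite tr_nodeK.
by rewrite /tr_family tr_setK; split=> //; split=> //; apply/is_start_tr.
Qed.

Lemma right_defect_tr S T q :
  right_defect (tr_set S) (tr_family T) q <-> left_defect S T (tr_node q).
Proof.
split=> -[Sq SNq att Nq_tile]; split=> //.
- exact/(attached_tr T q (NE q)).
- exact/(is_end_of_tile_tr T (Nn q)).
- exact/(attached_tr T q (NE q)).
- exact/(is_end_of_tile_tr T (Nn q)).
Qed.

Lemma left_defect_tr S T q :
  left_defect (tr_set S) (tr_family T) q <-> right_defect S T (tr_node q).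
Proof.
split=> -[Sq SNq att Nq_tile]; split=> //.
- exact/(attached_tr T q (NW q)).
- exact/(is_start_of_tile_tr T (Nn q)).
- exact/(attached_tr T q (NW q)).
- exact/(is_start_of_tile_tr T (Nn q)).
Qed.

Lemma left_defect_of_right_defect S T q : tiling S T ->
  right_defect S T q -> exists r, left_defect S T r.
Proof.
move=> hST rd.
have /(right_defect_of_left_defect (tiling_tr hST)) [r /right_defect_tr ldr] :
    left_defect (tr_set S) (tr_family T) (tr_node q).
  by apply/left_defect_tr; rewrite tr_nodeK.
by exists (tr_node r).
Qed.

Lemma shift_included_of_no_defect S T : tiling S T ->
  (forall q, ~ right_defect S T q) -> (forall q, ~ left_defect S T q) ->
  shift_included S T.
Proof.
move=> hST no_rd no_ld a Sa SNa t1 t2 T1 t1a T2 t2Na x t1x.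
have [le_ax | lt_xa] := leP (col a) (col x).
  by case: (walk_right hST T1 T2 t1a t2Na) => [[q /no_rd] | [q /no_ld] | incl] //; exact: incl.
have T1' : tr_family T (tr_set t1) by rewrite /tr_family tr_setK.
have T2' : tr_family T (tr_set t2) by rewrite /tr_family tr_setK.
have t1a' : tr_set t1 (tr_node a) by rewrite /tr_set tr_nodeK.
case: (walk_right (tiling_tr hST) T1' T2' t1a' t2Na) =>
  [[q /right_defect_tr /no_ld] | [q /left_defect_tr /no_rd] | incl] //.
by apply: (incl (tr_node x)); rewrite /tr_set ?tr_nodeK // !col_tr; lia.
Qed.

Lemma shift_included_of_no_right_defect S T : tiling S T ->
  (forall q, ~ right_defect S T q) -> shift_included S T.
Proof.
move=> hST no_rd; apply: shift_included_of_no_defect => // q.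
by move=> /(right_defect_of_left_defect hST) [r /no_rd].
Qed.

Lemma shift_included_of_no_left_defect S T : tiling S T ->
  (forall q, ~ left_defect S T q) -> shift_included S T.
Proof.
move=> hST no_ld; apply: shift_included_of_no_defect => // q.
by move=> /(left_defect_of_right_defect hST) [r /no_ld].
Qed.

(* Conditions (2), (4), (5), (7), (8), (6) and (9) of the theorem for an
   arbitrary region [S]; condition (3) is [shift_included]. *)
Definition depth_monotone (S : nset) (T : nset -> Prop) : Prop :=
  forall a, S a -> S (Nn a) ->
  forall d1 d2, depth T (Nn a) d1 -> depth T a d2 -> d2 <= d1.

Definition NW_attachment_lifts (S : nset) (T : nset -> Prop) : Prop :=
  forall a, S a -> S (Nn a) -> attached T a (NW a) ->
  S (NW (Nn a)) /\ attached T (Nn a) (NW (Nn a)).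

Definition NE_attachment_lifts (S : nset) (T : nset -> Prop) : Prop :=
  forall a, S a -> S (Nn a) -> attached T a (NE a) ->
  S (NE (Nn a)) /\ attached T (Nn a) (NE (Nn a)).

Definition tile_end_descends (S : nset) (T : nset -> Prop) : Prop :=
  forall a, S a -> S (Nn a) -> is_end_of_tile T (Nn a) -> is_end_of_tile T a.

Definition tile_start_descends (S : nset) (T : nset -> Prop) : Prop :=
  forall a, S a -> S (Nn a) -> is_start_of_tile T (Nn a) -> is_start_of_tile T a.

Definition right_cover_incl (S : nset) (T : nset -> Prop) : Prop :=
  forall a, S a -> S (Nn a) ->
  forall t1 t2 e1 e2, T t1 -> t1 (Nn a) -> T t2 -> t2 a ->
  is_end t1 e1 -> is_end t2 e2 -> (col e2 <= col e1)%R.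

Definition left_cover_incl (S : nset) (T : nset -> Prop) : Prop :=
  forall a, S a -> S (Nn a) ->
  forall t1 t2 s1 s2, T t1 -> t1 (Nn a) -> T t2 -> t2 a ->
  is_start t1 s1 -> is_start t2 s2 -> (col s1 <= col s2)%R.

Section Conditions.

Variables (S : nset) (T : nset -> Prop).
Hypothesis hST : tiling S T.

Section ShiftIncluded.

Hypothesis shift : shift_included S T.

Lemma right_cover_incl_of_shift : right_cover_incl S T.
Proof.
move=> a Sa SNa t1 t2 e1 e2 T1 t1Na T2 t2a [_ e1_max] [t2e2 _].
by have := e1_max _ (shift Sa SNa T2 t2a T1 t1Na t2e2); rewrite /col /=; lia.
Qed.

Lemma left_cover_incl_of_shift : left_cover_incl S T.
Proof.
move=> a Sa SNa t1 t2 s1 s2 T1 t1Na T2 t2a [_ s1_min] [t2s2 _].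
by have := s1_min _ (shift Sa SNa T2 t2a T1 t1Na t2s2); rewrite /col /=; lia.
Qed.

Lemma depth_monotone_of_shift : depth_monotone S T.
Proof.
move=> a Sa SNa d1 d2 [t [h [Tt [tNa [[_ h_max] ->]]]]].
move=> [t0 [h0 [T0 [t0a [[[n [t0n <-]] _] ->]]]]].
by have := h_max _ (shift Sa SNa T0 t0a Tt tNa t0n); rewrite /ht /=; lia.
Qed.

Lemma NW_attachment_lifts_of_shift : NW_attachment_lifts S T.
Proof.
move=> a Sa SNa [t0 [T0 [t0a t0NWa]]]; have [t Tt tNa] := tiling_cover hST SNa.
have tNWNa := shift Sa SNa T0 t0a Tt tNa t0NWa.
by split; [exact: (tiling_sub hST Tt tNWNa) | exists t].
Qed.

Lemma NE_attachment_lifts_of_shift : NE_attachment_lifts S T.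
Proof.
move=> a Sa SNa [t0 [T0 [t0a t0NEa]]]; have [t Tt tNa] := tiling_cover hST SNa.
have tNENa := shift Sa SNa T0 t0a Tt tNa t0NEa.
by split; [exact: (tiling_sub hST Tt tNENa) | exists t].
Qed.

Lemma tile_end_descends_of_shift : tile_end_descends S T.
Proof.
move=> a Sa SNa [t [Tt [tNa [_ Na_max]]]]; have [t0 T0 t0a] := tiling_cover hST Sa.
have [e [t0e e_max]] := shape_end (tiling_shape hST T0).
have := Na_max _ (shift Sa SNa T0 t0a Tt tNa t0e) => e_le.
by exists t0; do 2!split=> //; split=> // x /e_max; move: e_le; rewrite /col /=; lia.
Qed.

Lemma tile_start_descends_of_shift : tile_start_descends S T.
Proof.
move=> a Sa SNa [t [Tt [tNa [_ Na_min]]]]; have [t0 T0 t0a] := tiling_cover hST Sa.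
have [s [t0s s_min]] := shape_start (tiling_shape hST T0).
have := Na_min _ (shift Sa SNa T0 t0a Tt tNa t0s) => s_ge.
by exists t0; do 2!split=> //; split=> // x /s_min; move: s_ge; rewrite /col /=; lia.
Qed.

End ShiftIncluded.

Lemma no_right_defect_of_right_cover_incl :
  right_cover_incl S T -> forall q, ~ right_defect S T q.
Proof.
move=> rc q [Sq SNq [t [Tt [tq tNEq]]] [t' [Tt' [t'Nq Nq_end]]]].
have [e e_end] := shape_end (tiling_shape hST Tt).
have := rc q Sq SNq t' t (Nn q) e Tt' t'Nq Tt tq Nq_end e_end.
by have := e_end.2 _ tNEq; rewrite /col /=; lia.
Qed.

Lemma no_left_defect_of_left_cover_incl :
  left_cover_incl S T -> forall q, ~ left_defect S T q.
Proof.
move=> lc q [Sq SNq [t [Tt [tq tNWq]]] [t' [Tt' [t'Nq Nq_start]]]].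
have [s s_start] := shape_start (tiling_shape hST Tt).
have := lc q Sq SNq t' t (Nn q) s Tt' t'Nq Tt tq Nq_start s_start.
by have := s_start.2 _ tNWq; rewrite /col /=; lia.
Qed.

Lemma no_right_defect_of_depth_monotone :
  depth_monotone S T -> forall q, ~ right_defect S T q.
Proof.
move=> dm q [Sq SNq [t [Tt [tq tNEq]]] [t' [Tt' [t'Nq Nq_end]]]].
have [h [t_ht _ _]] := shape_ht (tiling_shape hST Tt).
have [h' [t'_ht _ h'_end]] := shape_ht (tiling_shape hST Tt').
have d1 : depth T (Nn q) 0.
  by exists t', h'; do 3!split=> //; rewrite (h'_end _ Nq_end) subnn.
have d2 : depth T q (h - ht q) by exists t, h.
by have := dm q Sq SNq _ _ d1 d2; have := t_ht.2 _ tNEq; rewrite /ht /=; lia.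
Qed.

Lemma no_left_defect_of_NW_attachment_lifts :
  NW_attachment_lifts S T -> forall q, ~ left_defect S T q.
Proof.
move=> lifts q [Sq SNq att [t' [Tt' [t'Nq [_ Nq_min]]]]].
have [_ [t'' [Tt'' [t''Nq t''NWNq]]]] := lifts q Sq SNq att.
by have := Nq_min _ (tiling_unique hST Tt'' Tt' t''Nq t'Nq t''NWNq); rewrite /col /=; lia.
Qed.

Lemma no_right_defect_of_NE_attachment_lifts :
  NE_attachment_lifts S T -> forall q, ~ right_defect S T q.
Proof.
move=> lifts q [Sq SNq att [t' [Tt' [t'Nq [_ Nq_max]]]]].
have [_ [t'' [Tt'' [t''Nq t''NENq]]]] := lifts q Sq SNq att.
by have := Nq_max _ (tiling_unique hST Tt'' Tt' t''Nq t'Nq t''NENq); rewrite /col /=; lia.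
Qed.

Lemma no_right_defect_of_tile_end_descends :
  tile_end_descends S T -> forall q, ~ right_defect S T q.
Proof.
move=> desc q [Sq SNq [t [Tt [tq tNEq]]] Nq_end].
have [t0 [T0 [t0q [_ q_max]]]] := desc q Sq SNq Nq_end.
by have := q_max _ (tiling_unique hST Tt T0 tq t0q tNEq); rewrite /col /=; lia.
Qed.

Lemma no_left_defect_of_tile_start_descends :
  tile_start_descends S T -> forall q, ~ left_defect S T q.
Proof.
move=> desc q [Sq SNq [t [Tt [tq tNWq]]] Nq_start].
have [t0 [T0 [t0q [_ q_min]]]] := desc q Sq SNq Nq_start.
by have := q_min _ (tiling_unique hST Tt T0 tq t0q tNWq); rewrite /col /=; lia.
Qed.

End Conditions.

Theorem theorem3p1 (l m : seq nat) (T : nset -> Prop) :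
  is_partition l -> is_partition m -> pcontains l m -> dyck_tiling l m T ->
  [<-> cover_inclusive l m T;
       (forall a, in_skew l m a -> in_skew l m (Nn a) ->
          forall d1 d2, depth T (Nn a) d1 -> depth T a d2 -> d2 <= d1);
       (forall a, in_skew l m a -> in_skew l m (Nn a) ->
          forall t1 t2, T t1 -> t1 a -> T t2 -> t2 (Nn a) ->
          forall x, t1 x -> t2 (Nn x));
       (forall a, in_skew l m a -> in_skew l m (Nn a) -> attached T a (NW a) ->
          in_skew l m (NW (Nn a)) /\ attached T (Nn a) (NW (Nn a)));
       (forall a, in_skew l m a -> in_skew l m (Nn a) ->
          is_end_of_tile T (Nn a) -> is_end_of_tile T a);
       right_cover_inclusive l m T;
       (forall a, in_skew l m a -> in_skew l m (Nn a) -> attached T a (NE a) ->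
          in_skew l m (NE (Nn a)) /\ attached T (Nn a) (NE (Nn a)));
       (forall a, in_skew l m a -> in_skew l m (Nn a) ->
          is_start_of_tile T (Nn a) -> is_start_of_tile T a);
       left_cover_inclusive l m T].
Proof.
move=> l_part m_part _ T_tiling; have hST := skew_tiling l_part m_part T_tiling.
have of_no_rd := shift_included_of_no_right_defect hST.
have of_no_ld := shift_included_of_no_left_defect hST.
tfae.
- case=> _ /(no_right_defect_of_right_cover_incl hST) /of_no_rd.
  exact: depth_monotone_of_shift.
- by move=> /(no_right_defect_of_depth_monotone hST) /of_no_rd.
- exact: NW_attachment_lifts_of_shift hST.
- move=> /(no_left_defect_of_NW_attachment_lifts hST) /of_no_ld.
  exact: tile_end_descends_of_shift hST.
- move=> /(no_right_defect_of_tile_end_descends hST) /of_no_rd.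
  exact: right_cover_incl_of_shift.
- move=> /(no_right_defect_of_right_cover_incl hST) /of_no_rd.
  exact: NE_attachment_lifts_of_shift hST.
- move=> /(no_right_defect_of_NE_attachment_lifts hST) /of_no_rd.
  exact: tile_start_descends_of_shift hST.
- move=> /(no_left_defect_of_tile_start_descends hST) /of_no_ld.
  exact: left_cover_incl_of_shift.
- move=> /(no_left_defect_of_left_cover_incl hST) /of_no_ld shift.
  by split; [exact: left_cover_incl_of_shift | exact: right_cover_incl_of_shift].
Qed.
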